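(* Let $\mathcal{M}=\langle S;\{R_i\}_{i\in I}\rangle$ be a model and $G\in\mathcal{M}$. Then there exists a set $X\subseteq\mathcal{E}^{<\omega}$ such that $G = X\to S$.
   Context: Terms $\mathcal{T}$ and $\mathcal{E}$-terms: with disjoint sets $\mathcal{X}$ ($\lambda$-variables) and $\mathcal{A}$ ($\mu$-variables), $\mathcal{T} ::= x \mid \lambda x.\mathcal{T} \mid (\mathcal{T}\ \mathcal{E}) \mid \langle \mathcal{T},\mathcal{T}\rangle \mid \omega_1\mathcal{T} \mid \omega_2\mathcal{T} \mid \mu a.\mathcal{T} \mid (a\ \mathcal{T})$ and $\mathcal{E} ::= \mathcal{T} \mid \pi_1 \mid \pi_2 \mid [x.\mathcal{T}, y.\mathcal{T}]$. Reduction $\triangleright$ is the compatible closure of: $(\lambda x.u\ v)\triangleright u[x:=v]$; $(\langle t_1,t_2\rangle\ \pi_i)\triangleright t_i$; $(\omega_i t\ [x_1.u_1,x_2.u_2])\triangleright u_i[x_i:=t]$; $((t\ [x_1.u_1,x_2.u_2])\ \varepsilon)\triangleright(t\ [x_1.(u_1\ \varepsilon),x_2.(u_2\ \varepsilon)])$; $(\mu a.t\ \varepsilon)\triangleright\mu a.t[a:=^*\varepsilon]$ ($t[a:=^*\varepsilon]$ replaces inductively each subterm $(a\ v)$ by $(a\ (v\ \varepsilon))$); $\triangleright^*$ is its reflexive-transitive closure. $\mathcal{E}^{<\omega}$ is the set of finite sequences of $\mathcal{E}$-terms, $\emptyset$ the empty one; for $\bar w=w_1\dots w_n$, $(t\ \bar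 w)$ is $t$ if $n=0$ and $((t\ w_1)\ w_2\dots w_n)$ otherwise. For a set $X$ of such sequences and a set of terms $S$, $X\to S=\{t \mid (t\ \bar w)\in S \text{ for all } \bar w\in X\}$. A set of terms $S$ is $\mu$-saturated if (i) $u\in S$ and $v\triangleright^* u$ imply $v\in S$, and (ii) $t\in S$, $a\in\mathcal{A}$ imply $\mu a.t\in S$ and $(a\ t)\in S$. For sets of terms $K,L$ and a fixed $\mu$-saturated $S$: $K\to L=\{t\mid (t\ u)\in L\ \forall u\in K\}$; $K\wedge L=\{t\mid (t\ \pi_1)\in K,\ (t\ \pi_2)\in L\}$; $K\vee L=\{t\mid$ for all $x,y,u,v$: if $u[x:=r]\in S$ and $v[y:=s]\in S$ for all $r\in K,s\in L$, then $(t\ [x.u,y.v])\in S\}$. A model $\mathcal{M}=\langle S;\{R_i\}_{i\in I}\rangle$, where $S$ is $\mu$-saturated and each $R_i=X_i\to S$ for some $X_i\subseteq\mathcal{E}^{<\omega}$, is the smallest set of sets of terms containing $S$ and all $R_i$ and closed under $\to,\wedge,\vee$ (as defined relative to $S$). *)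

From Stdlib Require Import List Relation_Operators.
Import ListNotations.

(* Two separate de Bruijn index spaces: lambda-variables (bound by Lam and
   by the two branches of Case) and mu-variables (bound by Mu). *)
Inductive term : Type :=
| Var   : nat -> term
| Lam   : term -> term
| App   : term -> eterm -> term
| Pair  : term -> term -> term
| Inj1  : term -> term
| Inj2  : term -> term
| Mu    : term -> term
| Named : nat -> term -> term         (* (a t) *)
with eterm : Type :=
| ETerm : term -> eterm
| Proj1 : eterm
| Proj2 : eterm
| Case  : term -> term -> eterm.      (* [x.u, y.v] *)

Fixpoint liftL (c : nat) (t : term) : term :=
  match t with
  | Var n => if Nat.leb c n then Var (S n) else Var n
  | Lam u => Lam (liftL (S c) u)
  | App u e => App (liftL c u) (liftLe c e)
  | Pair u v => Pair (liftL c u) (liftL c v)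
  | Inj1 u => Inj1 (liftL c u)
  | Inj2 u => Inj2 (liftL c u)
  | Mu u => Mu (liftL c u)
  | Named a u => Named a (liftL c u)
  end
with liftLe (c : nat) (e : eterm) : eterm :=
  match e with
  | ETerm u => ETerm (liftL c u)
  | Proj1 => Proj1
  | Proj2 => Proj2
  | Case u v => Case (liftL (S c) u) (liftL (S c) v)
  end.

Fixpoint liftM (c : nat) (t : term) : term :=
  match t with
  | Var n => Var n
  | Lam u => Lam (liftM c u)
  | App u e => App (liftM c u) (liftMe c e)
  | Pair u v => Pair (liftM c u) (liftM c v)
  | Inj1 u => Inj1 (liftM c u)
  | Inj2 u => Inj2 (liftM c u)
  | Mu u => Mu (liftM (S c) u)
  | Named a u => Named (if Nat.leb c a then S a else a) (liftM c u)
  end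
with liftMe (c : nat) (e : eterm) : eterm :=
  match e with
  | ETerm u => ETerm (liftM c u)
  | Proj1 => Proj1
  | Proj2 => Proj2
  | Case u v => Case (liftM c u) (liftM c v)
  end.

Fixpoint substL (j : nat) (s : term) (t : term) : term :=
  match t with
  | Var n => if Nat.eqb n j then s
             else if Nat.ltb j n then Var (pred n) else Var n
  | Lam u => Lam (substL (S j) (liftL 0 s) u)
  | App u e => App (substL j s u) (substLe j s e)
  | Pair u v => Pair (substL j s u) (substL j s v)
  | Inj1 u => Inj1 (substL j s u)
  | Inj2 u => Inj2 (substL j s u)
  | Mu u => Mu (substL j (liftM 0 s) u)
  | Named a u => Named a (substL j s u)
  end
with substLe (j : nat) (s : term) (e : eterm) : eterm :=
  match e with
  | ETerm u => ETerm (substL j s u)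
  | Proj1 => Proj1
  | Proj2 => Proj2
  | Case u v => Case (substL (S j) (liftL 0 s) u) (substL (S j) (liftL 0 s) v)
  end.

Definition subst0 (u v : term) : term := substL 0 v u.

Fixpoint substM (a : nat) (eps : eterm) (t : term) : term :=
  match t with
  | Var n => Var n
  | Lam u => Lam (substM a (liftLe 0 eps) u)
  | App u e => App (substM a eps u) (substMe a eps e)
  | Pair u v => Pair (substM a eps u) (substM a eps v)
  | Inj1 u => Inj1 (substM a eps u)
  | Inj2 u => Inj2 (substM a eps u)
  | Mu u => Mu (substM (S a) (liftMe 0 eps) u)
  | Named b u =>
      if Nat.eqb a b then Named b (App (substM a eps u) eps)
      else Named b (substM a eps u)
  end
with substMe (a : nat) (eps : eterm) (e : eterm) : eterm :=
  match e with
  | ETerm u => ETerm (substM a eps u)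
  | Proj1 => Proj1
  | Proj2 => Proj2
  | Case u v => Case (substM a (liftLe 0 eps) u) (substM a (liftLe 0 eps) v)
  end.

Inductive step : term -> term -> Prop :=
| st_beta : forall u v, step (App (Lam u) (ETerm v)) (subst0 u v)
| st_proj1 : forall t1 t2, step (App (Pair t1 t2) Proj1) t1
| st_proj2 : forall t1 t2, step (App (Pair t1 t2) Proj2) t2
| st_case1 : forall t u1 u2, step (App (Inj1 t) (Case u1 u2)) (subst0 u1 t)
| st_case2 : forall t u1 u2, step (App (Inj2 t) (Case u1 u2)) (subst0 u2 t)
| st_comm : forall t u1 u2 eps,
    step (App (App t (Case u1 u2)) eps)
         (App t (Case (App u1 (liftLe 0 eps)) (App u2 (liftLe 0 eps))))
| st_mu : forall t eps, step (App (Mu t) eps) (Mu (substM 0 (liftMe 0 eps) t))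
| st_lam : forall t t', step t t' -> step (Lam t) (Lam t')
| st_appl : forall t t' e, step t t' -> step (App t e) (App t' e)
| st_appr : forall t e e', estep e e' -> step (App t e) (App t e')
| st_pairl : forall t t' u, step t t' -> step (Pair t u) (Pair t' u)
| st_pairr : forall t u u', step u u' -> step (Pair t u) (Pair t u')
| st_inj1 : forall t t', step t t' -> step (Inj1 t) (Inj1 t')
| st_inj2 : forall t t', step t t' -> step (Inj2 t) (Inj2 t')
| st_mub : forall t t', step t t' -> step (Mu t) (Mu t')
| st_named : forall a t t', step t t' -> step (Named a t) (Named a t')
with estep : eterm -> eterm -> Prop :=
| es_term : forall t t', step t t' -> estep (ETerm t) (ETerm t')
| es_casel : forall u u' v, step u u' -> estep (Case u v) (Case u' v)
| es_caser : forall u v v', step v v' -> estep (Case u v) (Case u v').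

Definition red_star : term -> term -> Prop := clos_refl_trans term step.

Definition tset := term -> Prop.
Definition seqset := list eterm -> Prop.

Definition app_seq (t : term) (ws : list eterm) : term :=
  fold_left (fun u w => App u w) ws t.

(* X -> S for X a set of finite sequences of E-terms *)
Definition seq_arrow (X : seqset) (S : tset) : tset :=
  fun t => forall ws, X ws -> S (app_seq t ws).

Definition mu_saturated (S : tset) : Prop :=
  (forall u v, S u -> red_star v u -> S v) /\
  (forall t a, S t -> S (Mu t) /\ S (Named a t)).

Definition arrowK (K L : tset) : tset :=
  fun t => forall u, K u -> L (App t (ETerm u)).

Definition andK (K L : tset) : tset :=
  fun t => K (App t Proj1) /\ L (App t Proj2).

(* K \/ L relative to S; u, v are the bodies of the binders x., y. *)
Definition orK (S : tset) (K L : tset) : tset :=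
  fun t => forall u v,
    (forall r, K r -> S (subst0 u r)) ->
    (forall s, L s -> S (subst0 v s)) ->
    S (App t (Case u v)).

(* the model <S; {R_i}>: smallest family containing S, the R_i and closed
   under ->, /\, \/ *)
Inductive in_model (S : tset) {I : Type} (R : I -> tset) : tset -> Prop :=
| im_S : in_model S R S
| im_R : forall i, in_model S R (R i)
| im_arrow : forall K L, in_model S R K -> in_model S R L -> in_model S R (arrowK K L)
| im_and : forall K L, in_model S R K -> in_model S R L -> in_model S R (andK K L)
| im_or : forall K L, in_model S R K -> in_model S R L -> in_model S R (orK S K L).

(* Each base type
   and each type constructor is shown to be "representable": S itself is
   {[]} -> S, each R_i = X_i -> S is so by definition, and the three
   constructors ->, /\ and \/ transform representable types into
   representable ones, by prefixing the argument sequences with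
     - an argument u of K               (K -> (Y -> S)   = Y' -> S),
     - a projection pi_1 or pi_2        ((Y1 -> S) /\ (Y2 -> S) = Y' -> S),
     - a single case-eliminator [x.u, y.v] whose branches send K, resp. L,
       into S                           (K \/ L = Y' -> S). *)

From Stdlib Require Import List FunctionalExtensionality PropExtensionality.
Import ListNotations.

Lemma tset_ext (A B : tset) : (forall t, A t <-> B t) -> A = B.
Proof.
  intro H. apply functional_extensionality; intro t.
  apply propositional_extensionality; apply H.
Qed.

Section Representability.

Variable S : tset.

Definition nil_seqs : seqset := fun ws => ws = [].

Definition arg_seqs (K : tset) (Y : seqset) : seqset :=
  fun ws => exists u ws', ws = ETerm u :: ws' /\ K u /\ Y ws'.

Definition proj_seqs (Y1 Y2 : seqset) : seqset :=
  fun ws => (exists ws', ws = Proj1 :: ws' /\ Y1 ws') \/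
            (exists ws', ws = Proj2 :: ws' /\ Y2 ws').

Definition case_seqs (K L : tset) : seqset :=
  fun ws => exists u v, ws = [Case u v] /\
    (forall r, K r -> S (subst0 u r)) /\
    (forall s, L s -> S (subst0 v s)).

Lemma seq_arrow_nil : S = seq_arrow nil_seqs S.
Proof.
  apply tset_ext; intro t; split.
  - intros H ws ->. exact H.
  - intro H. exact (H [] eq_refl).
Qed.

Lemma arrowK_seq_arrow (K : tset) (Y : seqset) :
  arrowK K (seq_arrow Y S) = seq_arrow (arg_seqs K Y) S.
Proof.
  apply tset_ext; intro t; split.
  - intros H ws (u & ws' & -> & Hu & Hy). exact (H u Hu ws' Hy).
  - intros H u Hu ws' Hy. apply (H (ETerm u :: ws')). now exists u, ws'.
Qed.

Lemma andK_seq_arrow (Y1 Y2 : seqset) :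
  andK (seq_arrow Y1 S) (seq_arrow Y2 S) = seq_arrow (proj_seqs Y1 Y2) S.
Proof.
  apply tset_ext; intro t; split.
  - intros [H1 H2] ws [(ws' & -> & Hy) | (ws' & -> & Hy)].
    + exact (H1 ws' Hy).
    + exact (H2 ws' Hy).
  - intro H. split; intros ws' Hy.
    + apply (H (Proj1 :: ws')). left. now exists ws'.
    + apply (H (Proj2 :: ws')). right. now exists ws'.
Qed.

Lemma orK_seq_arrow (K L : tset) : orK S K L = seq_arrow (case_seqs K L) S.
Proof.
  apply tset_ext; intro t; split.
  - intros H ws (u & v & -> & Hu & Hv). exact (H u v Hu Hv).
  - intros H u v Hu Hv. apply (H [Case u v]). now exists u, v.
Qed.

End Representability.

Theorem mainTheorem2 (S : tset) (I : Type) (Xs : I -> seqset)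
  (HS : mu_saturated S) (G : tset)
  (HG : in_model S (fun i => seq_arrow (Xs i) S) G) :
  exists X : seqset, G = seq_arrow X S.
Proof.
  induction HG as [| i | K L _ _ _ [Y ->] | K L _ [Y1 ->] _ [Y2 ->] | K L _ _ _ _].
  - exists nil_seqs. apply seq_arrow_nil.
  - exists (Xs i). reflexivity.
  - exists (arg_seqs K Y). apply arrowK_seq_arrow.
  - exists (proj_seqs Y1 Y2). apply andK_seq_arrow.
  - exists (case_seqs S K L). apply orK_seq_arrow.
Qed.
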